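(* Let $\Sigma\in\mathbb C^{L_T\times L_T}$ be positive semidefinite and let $M\ge\mathrm{Rank}(\Sigma)$ be an integer. Then there exist unit-norm vectors $t_1,\dots,t_M\in\mathbb C^{L_T}$ and powers $p_1,\dots,p_M$ with $\Sigma=\sum_{m=1}^M p_mt_mt_m^\dagger$ and $p_m=\mathrm{Tr}(\Sigma)/M$ for all $m$; i.e. uniform power allocation over the streams of a link loses no optimality. *)

From HB Require Import structures.
From mathcomp Require Import all_boot all_order all_algebra all_field.
Set Implicit Arguments. Unset Strict Implicit. Unset Printing Implicit Defensive.
Import Order.TTheory GRing.Theory Num.Theory.
Local Open Scope ring_scope.

Definition adjmx (m n : nat) (A : 'M[algC]_(m, n)) : 'M[algC]_(n, m) :=
  (map_mx (@Num.conj_op algC) A)^T.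

Definition psdmx (n : nat) (A : 'M[algC]_n) : Prop :=
  adjmx A = A /\ forall v : 'cV[algC]_n, 0 <= (adjmx v *m A *m v) 0 0.

From HB Require Import structures.
From mathcomp Require Import all_boot all_order all_algebra all_field.
Set Implicit Arguments. Unset Strict Implicit. Unset Printing Implicit Defensive.
Import Order.TTheory GRing.Theory Num.Theory.
Local Open Scope ring_scope.

(** Write [Sigma = U U^+] where [U] has [M] mutually orthogonal columns: from
    the spectral decomposition keep the (at most [M]) eigenvectors with nonzero
    eigenvalue, scaled by the square roots of the eigenvalues.  Mixing the
    columns by a unitary [F] whose entries all have modulus [1/sqrt M] (a
    scaled discrete Fourier matrix) leaves [U U^+] unchanged, and every column
    of [U F] then has squared norm [sum_a |F a j|^2 (U^+ U)_aa = Tr Sigma / M].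
    Normalising these columns gives the unit vectors [t_m], all with power
    [Tr Sigma / M]. *)

Section SelectionMatrix.
Variables (R : pzRingType) (n N : nat) (s : seq 'I_n) (i0 : 'I_n).
Hypothesis s_uniq : uniq s.

Definition selmx : 'M[R]_(N, n) :=
  \matrix_(a < N, i < n) ((a < size s)%N && (i == nth i0 s a))%:R.

Lemma selmx_diag_mul (e : 'rV[R]_n) :
  selmx *m diag_mx e *m selmx^T =
  diag_mx (\row_(a < N) ((a < size s)%N%:R * e 0 (nth i0 s a))).
Proof.
rewrite mul_mx_diag; apply/matrixP => a b; rewrite !mxE.
have [ak|ak] := boolP (a < size s)%N; last first.
  by rewrite mul0r mul0rn big1 // => i _; rewrite !mxE (negPf ak) !mul0r.
rewrite (bigD1 (nth i0 s a)) //= big1 ?addr0; last first.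
  by move=> i /negPf ni; rewrite !mxE ak ni !mul0r.
rewrite !mxE ak eqxx !mul1r.
have [<-|nab] := eqVneq a b; first by rewrite ak eqxx mulr1.
rewrite mulr0n; have [bk|bk] := boolP (b < size s)%N; last by rewrite mulr0.
by rewrite nth_uniq //; move: nab; rewrite -val_eqE => /negPf ->; rewrite mulr0.
Qed.

Lemma trmx_selmx_mul : (size s <= N)%N ->
  selmx^T *m selmx = diag_mx (\row_(i < n) (i \in s)%:R).
Proof.
move=> sN; apply/matrixP => i j; rewrite !mxE.
have [iS|niS] := boolP (i \in s); last first.
  rewrite big1 ?mul0rn // => a _; rewrite !mxE.
  have [ak|ak] := boolP (a < size s)%N; last by rewrite mul0r.
  by rewrite (_ : i == _ = false) ?mul0r //; apply: contraNF niS => /eqP ->; rewrite mem_nth.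
have iN : (index i s < N)%N by rewrite (leq_trans _ sN) // index_mem.
rewrite (bigD1 (Ordinal iN)) //= big1 ?addr0; last first.
  move=> a na; rewrite !mxE.
  have [ak|ak] := boolP (a < size s)%N; last by rewrite mul0r.
  have [iE|] := eqVneq i (nth i0 s a); last by rewrite mul0r.
  by move: na; rewrite -val_eqE /= iE index_uniq // eqxx.
by rewrite !mxE /= index_mem iS nth_index // eqxx mul1r eq_sym.
Qed.

End SelectionMatrix.

Arguments selmx {R n} N s i0.

Lemma mulmx_sum_col_row (R : pzSemiRingType) m n p
    (A : 'M[R]_(m, n)) (B : 'M[R]_(n, p)) :
  A *m B = \sum_(k < n) col k A *m row k B.
Proof.
apply/matrixP => i j; rewrite !mxE summxE; apply: eq_bigr => k _.
by rewrite !mxE big_ord1 !mxE.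
Qed.

Lemma size_support_le_rank_diag (F : fieldType) n (d : 'rV[F]_n.+1) :
  (size [seq i <- enum 'I_n.+1 | (d 0 i != 0)%R] <= \rank (diag_mx d))%N.
Proof.
set s := [seq i <- _ | _].
have s_uniq : uniq s by rewrite filter_uniq ?enum_uniq.
have <- : \rank (selmx (size s) s ord0 *m diag_mx d *m (selmx (size s) s ord0)^T) = size s.
  rewrite selmx_diag_mul //; apply: mxrank_unit; rewrite unitmxE det_diag unitfE.
  apply/prodf_neq0 => a _; rewrite mxE ltn_ord mul1r.
  by have := mem_nth ord0 (ltn_ord a); rewrite mem_filter => /andP[].
exact: leq_trans (mxrankM_maxl _ _) (mxrankM_maxr _ _).
Qed.

Local Open Scope sesquilinear_scope.

Section Hermitian.
Variable C : numClosedFieldType.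

Lemma trmxC_mul m n p (A : 'M[C]_(m, n)) (B : 'M[C]_(n, p)) :
  (A *m B)^t* = B^t* *m A^t*.
Proof. by rewrite trmx_mul map_mxM. Qed.

Lemma trmxC_scale m n a (A : 'M[C]_(m, n)) : (a *: A)^t* = a^* *: A^t*.
Proof. by apply/matrixP => i j; rewrite !mxE rmorphM. Qed.

Lemma trmxC_col m n (A : 'M[C]_(m, n)) k : (col k A)^t* = row k (A^t*).
Proof. by apply/matrixP => i j; rewrite !mxE. Qed.

Lemma cV_normE n (c : 'cV[C]_n) : (c^t* *m c) 0 0 = \sum_i `|c i 0| ^+ 2.
Proof. by rewrite mxE; apply: eq_bigr => i _; rewrite !mxE normCKC. Qed.

Lemma cV_norm_ge0 n (c : 'cV[C]_n) : 0 <= (c^t* *m c) 0 0.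
Proof. by rewrite cV_normE sumr_ge0 // => i _; rewrite exprn_ge0. Qed.

Lemma cV_norm_eq0 n (c : 'cV[C]_n) : ((c^t* *m c) 0 0 == 0) = (c == 0).
Proof.
rewrite cV_normE; apply/eqP/eqP => [c0|->]; last first.
  by rewrite big1 // => i _; rewrite mxE normr0 expr0n.
apply/matrixP => i j; rewrite ord1 mxE; apply/eqP.
by rewrite -normr_eq0 -(sqrf_eq0 `|_|) (psumr_eq0P _ c0) // => k _; rewrite exprn_ge0.
Qed.

Lemma cV_outer_unit n (c : 'cV[C]_n.+1) :
  exists t : 'cV[C]_n.+1, (t^t* *m t) 0 0 = 1 /\
    c *m c^t* = (c^t* *m c) 0 0 *: (t *m t^t*).
Proof.
have [->|c0] := eqVneq c 0.
  exists (delta_mx 0 0); rewrite !(mulmx0, mul0mx).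
  split; last by rewrite [X in X *: _]mxE scale0r.
  by rewrite trmx_delta map_delta_mx mul_delta_mx mxE !eqxx.
have p_gt0 : 0 < (c^t* *m c) 0 0 by rewrite lt_def cV_norm_ge0 cV_norm_eq0 c0.
set p := (c^t* *m c) 0 0 in p_gt0 *.
have r_real : ((sqrtC p)^-1)^* = (sqrtC p)^-1.
  by rewrite geC0_conj // invr_ge0 sqrtC_ge0 ltW.
have r2 : (sqrtC p)^-1 * (sqrtC p)^-1 = p^-1 by rewrite -invfM -expr2 sqrtCK.
exists ((sqrtC p)^-1 *: c).
rewrite trmxC_scale r_real -!scalemxAl -!scalemxAr !scalerA r2 mxE -/p.
by rewrite mulVf ?gt_eqF // -mulrA r2 mulfV ?gt_eqF // scale1r.
Qed.

End Hermitian.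

Lemma psd_spectral (C : numClosedFieldType) n (S : 'M[C]_n) :
  S^t* = S -> (forall v : 'cV[C]_n, 0 <= (v^t* *m S *m v) 0 0) ->
  exists (W : 'M[C]_n) (d : 'rV[C]_n),
    [/\ W \is unitarymx, S = W *m diag_mx d *m W^t* & forall i, 0 <= d 0 i].
Proof.
move=> S_herm S_psd; have S_normal : S \is normalmx by apply/normalmxP; rewrite S_herm.
have SE := orthomx_spectralP S_normal.
set P := spectralmx S in SE; set d := spectral_diag S in SE.
have P_unitary : P \is unitarymx by apply: spectral_unitarymx.
rewrite invmx_unitary // in SE.
exists (P^t*), d; rewrite trmxC_unitary trmxCK; split=> // i.
have := S_psd (P^t* *m delta_mx i 0).
rewrite trmxC_mul trmxCK trmx_delta map_delta_mx SE !mulmxA.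
rewrite -(mulmxA _ P) (unitarymxP P_unitary) mulmx1 mulmxtVK //.
by rewrite -rowE row_diag_mx -scalemxAl mul_delta_mx mxE mxE eqxx mulr1.
Qed.

Lemma psd_thin_factor (C : numClosedFieldType) n M (S : 'M[C]_n.+1) :
  S^t* = S -> (forall v : 'cV[C]_n.+1, 0 <= (v^t* *m S *m v) 0 0) ->
  (\rank S <= M)%N ->
  exists (U : 'M[C]_(n.+1, M)) (g : 'rV[C]_M), U *m U^t* = S /\ U^t* *m U = diag_mx g.
Proof.
move=> S_herm S_psd rkS.
have [W [d [W_unitary SE d_ge0]]] := psd_spectral S_herm S_psd.
have Wt_unitary : W^t* \is unitarymx by rewrite trmxC_unitary.
set s := [seq i <- enum 'I_n.+1 | d 0 i != 0].
have s_uniq : uniq s by rewrite filter_uniq ?enum_uniq.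
have sM : (size s <= M)%N.
  apply: leq_trans (size_support_le_rank_diag d) _; apply: leq_trans rkS.
  have -> : diag_mx d = W^t* *m S *m W.
    by rewrite SE !mulmxA mulmxKtV // -[W^t*]mul1mx mulmxKtV // mul1mx.
  exact: leq_trans (mxrankM_maxl _ _) (mxrankM_maxr _ _).
pose r := \row_i sqrtC (d 0 i).
have r_herm : (diag_mx r)^t* = diag_mx r.
  rewrite tr_diag_mx; apply/matrixP => i j; rewrite !mxE rmorphMn /=.
  by rewrite geC0_conj // sqrtC_ge0.
have r2 : diag_mx r *m diag_mx r = diag_mx d.
  by rewrite mulmx_diag; congr diag_mx; apply/rowP => i; rewrite !mxE -expr2 sqrtCK.
pose E : 'M[C]_(M, n.+1) := selmx M s ord0.
have E_real : E^T^t* = E.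
  by rewrite trmxK; apply/matrixP => a i; rewrite !mxE rmorph_nat.
exists (W *m diag_mx r *m E^T), (\row_a ((a < size s)%N%:R * d 0 (nth ord0 s a))).
rewrite !trmxC_mul E_real r_herm; split.
  rewrite mulmxA -(mulmxA _ E^T) trmx_selmx_mul // SE !mulmxA; congr (_ *m _).
  rewrite -!mulmxA !mulmx_diag; congr (_ *m diag_mx _); apply/rowP => i.
  rewrite !mxE mulrCA.
  case: (boolP (i \in s)) => [_|]; first by rewrite mul1r -expr2 sqrtCK.
  by rewrite mem_filter mem_enum andbT negbK => /eqP ->; rewrite sqrtC0 !mul0r.
by rewrite !mulmxA mulmxKtV // -(mulmxA E) r2 selmx_diag_mul.
Qed.

Lemma sum_unity_root_eq0 (R : idomainType) M (z : R) :
  z ^+ M = 1 -> z != 1 -> \sum_(j < M) z ^+ j = 0.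
Proof.
move=> zM z1; apply/eqP; have := subrX1 z M; rewrite zM subrr => /esym/eqP.
by rewrite mulf_eq0 subr_eq0 (negPf z1).
Qed.

Section Fourier.
Variables (C : numClosedFieldType) (M : nat) (w : C).
Hypothesis w_prim : M.-primitive_root w.

Lemma prim_root_neq0 : w != 0.
Proof. by rewrite (prim_root_eq0 w_prim) -lt0n (prim_order_gt0 w_prim). Qed.

Lemma norm_prim_root : `|w| = 1.
Proof.
apply/eqP; rewrite -(pexpr_eq1 (prim_order_gt0 w_prim)) // -normrX.
by rewrite (prim_expr_order w_prim) normr1.
Qed.

Lemma prim_root_conj : w^* = w^-1.
Proof.
by rewrite -[LHS]mulr1 -(mulfV prim_root_neq0) mulrA -normCKC norm_prim_root expr1n mul1r.
Qed.

Definition fouriermx : 'M[C]_M := \matrix_(a < M, j < M) w ^+ (a * j).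

Lemma fouriermx_mulC : fouriermx *m fouriermx^t* = M%:R%:M.
Proof.
apply/matrixP => a b; rewrite !mxE.
pose z := w ^+ a / w ^+ b.
under eq_bigr => j _ do
  rewrite !mxE rmorphXn /= prim_root_conj !exprM -exprMn exprVn -/z.
have [ab|a_neq_b] := eqVneq a b.
  rewrite /z ab divff ?expf_neq0 ?prim_root_neq0 //; under eq_bigr do rewrite expr1n.
  by rewrite sumr_const card_ord mulr1n.
rewrite sum_unity_root_eq0 //.
  rewrite exprMn exprVn -!exprM !(mulnC _ M) !exprM !(prim_expr_order w_prim).
  by rewrite !expr1n invr1 mulr1.
apply: contra a_neq_b; rewrite /z (can2_eq (divfK _) (mulfK _)) ?expf_neq0 ?prim_root_neq0 //.
by rewrite mul1r (eq_prim_root_expr w_prim) !modn_small // => /eqP/val_inj->.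
Qed.

Lemma norm_fouriermx a j : `|fouriermx a j| = 1.
Proof. by rewrite mxE normrX norm_prim_root expr1n. Qed.

Lemma fouriermx_unitary : (sqrtC M%:R)^-1 *: fouriermx \is unitarymx.
Proof.
have M_gt0 : (0 < M%:R :> C) by rewrite ltr0n (prim_order_gt0 w_prim).
apply/unitarymxP; rewrite trmxC_scale -scalemxAl -scalemxAr fouriermx_mulC scalerA.
rewrite geC0_conj ?invr_ge0 ?sqrtC_ge0 ?ltW // -invfM -expr2 sqrtCK.
by rewrite -scalemx1 scalerA mulVf ?gt_eqF // scale1r.
Qed.

End Fourier.

Lemma flat_unitary_exists M : exists F : 'M[algC]_M,
  F \is unitarymx /\ forall a j, `|F a j| ^+ 2 = M%:R^-1.
Proof.
case: (posnP M) => [->|M_gt0].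
  by exists 0; split=> [|[]//]; apply/unitarymxP/matrixP => -[].
have [w w_prim] := C_prim_root_exists M_gt0.
exists ((sqrtC M%:R)^-1 *: fouriermx M w); split; first exact: fouriermx_unitary.
move=> a j; rewrite mxE normrM norm_fouriermx // mulr1 normfV exprVn.
by rewrite ger0_norm ?sqrtC_ge0 // sqrtCK.
Qed.

Lemma flat_mixing_col_norm (C : numClosedFieldType) m M
    (U : 'M[C]_(m, M)) (g : 'rV[C]_M) (F : 'M[C]_M) j :
  U^t* *m U = diag_mx g -> (forall a j, `|F a j| ^+ 2 = M%:R^-1) ->
  ((col j (U *m F))^t* *m col j (U *m F)) 0 0 = \tr (U *m U^t*) / M%:R.
Proof.
move=> UtU F_flat; rewrite mxtrace_mulC UtU mxtrace_diag mulr_suml trmxC_col.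
have -> : (row j ((U *m F)^t*) *m col j (U *m F)) 0 0 = ((U *m F)^t* *m (U *m F)) j j.
  by rewrite !mxE; apply: eq_bigr => k _; rewrite !mxE.
rewrite trmxC_mul mulmxA -(mulmxA _ (U^t*)) UtU mul_mx_diag mxE.
by apply: eq_bigr => a _; rewrite !mxE mulrAC -normCKC F_flat mulrC.
Qed.

Theorem theorem5 (LT : nat) (Sigma : 'M[algC]_LT) (M : nat) :
  (0 < LT)%N -> psdmx Sigma -> (\rank Sigma <= M)%N ->
  exists (t : 'I_M -> 'cV[algC]_LT) (p : 'I_M -> algC),
    (forall m, (adjmx (t m) *m t m) 0 0 = 1) /\
    Sigma = \sum_(m < M) p m *: (t m *m adjmx (t m)) /\
    (forall m, p m = \tr Sigma / M%:R).
Proof.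
have adjE k l (A : 'M[algC]_(k, l)) : adjmx A = A^t* by rewrite /adjmx map_trmx.
case: LT Sigma => [//|n] Sigma _ [Sigma_adj Sigma_adj_psd] rkSigma.
have Sigma_herm : Sigma^t* = Sigma by rewrite -adjE.
have Sigma_psd (v : 'cV_n.+1) : 0 <= (v^t* *m Sigma *m v) 0 0.
  by rewrite -adjE; exact: Sigma_adj_psd.
have [U [g [UU UtU]]] := psd_thin_factor Sigma_herm Sigma_psd rkSigma.
have [F [/unitarymxP F_unitary F_flat]] := flat_unitary_exists M.
pose V := U *m F.
have [t tP] := fin_all_exists (fun m => cV_outer_unit (col m V)).
exists t, (fun=> \tr Sigma / M%:R); split=> [m|]; first by rewrite adjE; case: (tP m).
have VV : V *m V^t* = Sigma by rewrite trmxC_mul mulmxA -(mulmxA U) F_unitary mulmx1.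
split=> //; rewrite -{1}VV mulmx_sum_col_row.
apply: eq_bigr => m _; rewrite -trmxC_col; have [_ ->] := tP m.
by rewrite adjE (flat_mixing_col_norm _ UtU F_flat) UU.
Qed.
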